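(* $\mathrm{Pol}(\mathbb{M}_0)$ does not satisfy $\Sigma_2$, but $\mathrm{Pol}(\mathbb{M}_1)$ satisfies $\Sigma_2$.
   Context: $\psi_2=\{(0,1),(1,0),(2,2)\}$; $\mu_2$ is the equivalence relation on $\{0,1,2\}$ with classes $\{0,1\},\{2\}$ and $\rho_2=\{0,1,2\}^2\setminus\mu_2$. $\mathbb{M}_0=(\{0,1,2\};\psi_2,\rho_2,\{0,1\},\{0\},\{1\},\{2\})$ and $\mathbb{M}_1=(\{0,1,2\};\psi_2,\mu_2,\{0\},\{1\},\{2\})$; $\mathrm{Pol}$ denotes the clone of all operations preserving the given relations. A clone satisfies $\Sigma_2$ if it contains a 5-ary symmetric operation $f$ (invariant under all permutations of its arguments) satisfying $f(x,x,y,y,z)\approx f(x,y,y,z,z)$. *)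

From mathcomp Require Import all_boot perm.
Set Implicit Arguments. Unset Strict Implicit. Unset Printing Implicit Defensive.

Notation D := 'I_3.

Definition op (n : nat) := {ffun 'I_n -> D} -> D.

Definition preserves2 n (R : rel D) (f : op n) : Prop :=
  forall x y : {ffun 'I_n -> D}, (forall i, R (x i) (y i)) -> R (f x) (f y).

Definition preserves1 n (P : pred D) (f : op n) : Prop :=
  forall x : {ffun 'I_n -> D}, (forall i, P (x i)) -> P (f x).

Definition psi2 : rel D := fun a b =>
  [|| (val a == 0) && (val b == 1), (val a == 1) && (val b == 0)
    | (val a == 2) && (val b == 2)].

Definition mu2 : rel D := fun a b => (val a == 2) == (val b == 2).
Definition rho2 : rel D := fun a b => ~~ mu2 a b.

Definition in01 : pred D := fun a => val a <= 1.
Definition is_const (c : nat) : pred D := fun a => val a == c.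

Definition Pol_M0 (n : nat) (f : op n) : Prop :=
  [/\ preserves2 psi2 f, preserves2 rho2 f, preserves1 in01 f,
      preserves1 (is_const 0) f
    & preserves1 (is_const 1) f /\ preserves1 (is_const 2) f].

Definition Pol_M1 (n : nat) (f : op n) : Prop :=
  [/\ preserves2 psi2 f, preserves2 mu2 f,
      preserves1 (is_const 0) f, preserves1 (is_const 1) f
    & preserves1 (is_const 2) f].

Definition tup5 (a b c d e : D) : {ffun 'I_5 -> D} :=
  [ffun i : 'I_5 => nth a [:: a; b; c; d; e] i].

Definition Sigma2 (C : forall n, op n -> Prop) : Prop :=
  exists f : op 5,
    [/\ C 5 f,
        (forall (s : 'S_5) (x : {ffun 'I_5 -> D}), f [ffun i => x (s i)] = f x)
      & (forall x y z : D, f (tup5 x x y y z) = f (tup5 x y y z z))].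

(* psi2 is the graph of the transposition (0 1), so a symmetric polymorphism f
   of psi2 satisfies f x = (0 1)(f x), i.e. f x = 2, whenever the tuple x is a
   permutation of its image under (0 1).  This applies to (0,0,1,1,2) and to
   (2,2,2,0,1); the Sigma_2 identity moves the first to (0,1,1,2,2), which is
   rho2-related to (2,2,2,0,1) coordinatewise, while 2 is not rho2-related to
   itself.  For M1, "2 if some argument is 2, else the majority of 0 and 1" is a
   symmetric polymorphism of odd arity, and it satisfies Sigma_2 in arity 5. *)
From mathcomp Require Import all_boot perm.

Set Implicit Arguments.
Unset Strict Implicit.
Unset Printing Implicit Defensive.

Notation d0 := (@Ordinal 3 0 isT).
Notation d1 := (@Ordinal 3 1 isT).
Notation d2 := (@Ordinal 3 2 isT).

Definition symmetric_op n (f : op n) : Prop :=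
  forall (s : 'S_n) (x : {ffun 'I_n -> D}), f [ffun i => x (s i)] = f x.

Lemma preserves2_graphE n (R : rel D) (g : D -> D) (f : op n) :
  (forall a b, R a b = (b == g a)) ->
  preserves2 R f <-> (forall x : {ffun 'I_n -> D}, f [ffun i => g (x i)] = g (f x)).
Proof.
move=> RE; split=> [pres_f x | comm_f x y xRy].
  by apply/eqP; rewrite -RE; apply: pres_f => i; rewrite RE ffunE.
have -> : y = [ffun i => g (x i)].
  by apply/ffunP => i; rewrite ffunE; apply/eqP; rewrite -RE.
by rewrite RE comm_f.
Qed.

Lemma symmetric_commuting_fixed n (g : D -> D) (f : op n) :
  symmetric_op f -> (forall x : {ffun 'I_n -> D}, f [ffun i => g (x i)] = g (f x)) ->
  forall (x : {ffun 'I_n -> D}) (s : 'S_n),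
  [ffun i => x (s i)] = [ffun i => g (x i)] -> g (f x) = f x.
Proof. by move=> sym_f comm_f x s xsE; rewrite -comm_f -xsE sym_f. Qed.

Lemma idempotent_preserves_const n (f : op n) (k : nat) : 0 < n ->
  (forall (x : {ffun 'I_n -> D}) c, (forall i, x i = c) -> f x = c) ->
  preserves1 (is_const k) f.
Proof.
move=> n_gt0 idem_f x xk; have xE i : x i = x (Ordinal n_gt0).
  by apply: val_inj; rewrite (eqP (xk _)) (eqP (xk _)).
by rewrite (idem_f x _ xE).
Qed.

Definition swap01 : {perm D} := tperm d0 d1.

Lemma psi2E a b : psi2 a b = (b == swap01 a).
Proof.
by case: a => [[|[|[|?]]] ?] //; case: b => [[|[|[|?]]] ?]; rewrite permE.
Qed.

Lemma swap01_fixed a : swap01 a = a -> a = d2.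
Proof.
by case: a => [[|[|[|?]]] ?] //; rewrite permE => /(congr1 val) //= _; apply: val_inj.
Qed.

Lemma not_Sigma2_Pol_M0 : ~ Sigma2 Pol_M0.
Proof.
case=> f [[psi_f rho_f _ _ _] sym_f sigma_f].
have swap_f := (preserves2_graphE f psi2E).1 psi_f.
have fixed_f (x : {ffun 'I_5 -> D}) (s : 'S_5) :
    [ffun i => x (s i)] = [ffun i => swap01 (x i)] -> f x = d2.
  by move=> /(symmetric_commuting_fixed sym_f swap_f) /swap01_fixed.
pose p k (lt_k5 : k < 5) : 'I_5 := Ordinal lt_k5.
have f00112 : f (tup5 d0 d0 d1 d1 d2) = d2.
  apply: (fixed_f _ (tperm (p 0 isT) (p 2 isT) * tperm (p 1%N isT) (p 3 isT))%g).
  by apply/ffunP => -[[|[|[|[|[|?]]]]] ?]; rewrite !ffunE ?permM !permE.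
have f22201 : f (tup5 d2 d2 d2 d0 d1) = d2.
  apply: (fixed_f _ (tperm (p 3 isT) (p 4 isT))).
  by apply/ffunP => -[[|[|[|[|[|?]]]]] ?]; rewrite !ffunE !permE.
suff : rho2 (f (tup5 d0 d1 d1 d2 d2)) (f (tup5 d2 d2 d2 d0 d1)).
  by rewrite -sigma_f f00112 f22201.
by apply: rho_f => -[[|[|[|[|[|?]]]]] ?]; rewrite !ffunE.
Qed.

Section TwosThenMajority.

Variable n : nat.
Implicit Types (x y : {ffun 'I_n -> D}) (a b c : D).

Definition count_of x c : nat := \sum_i (x i == c).

Lemma count_of_eq x y a b :
  (forall i, (x i == a) = (y i == b)) -> count_of x a = count_of y b.
Proof. by move=> xyE; apply: eq_bigr => i _; rewrite xyE. Qed.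

Lemma count_of_perm (s : 'S_n) x c : count_of [ffun i => x (s i)] c = count_of x c.
Proof.
rewrite /count_of [RHS](reindex_inj (@perm_inj _ s)).
by apply: eq_bigr => i _; rewrite ffunE.
Qed.

Lemma count_of_perm_map (g : {perm D}) x c :
  count_of [ffun i => g (x i)] (g c) = count_of x c.
Proof. by apply: count_of_eq => i; rewrite ffunE (inj_eq (@perm_inj _ g)). Qed.

Lemma count_of_partition x : count_of x d0 + count_of x d1 + count_of x d2 = n.
Proof.
rewrite /count_of -!big_split -[RHS](card_ord n) -sum1_card.
by apply: eq_bigr => i _; case: (x i) => [[|[|[|?]]] ?].
Qed.

Lemma count_of_const x c : (forall i, x i = c) -> count_of x c = n.
Proof.
move=> xE; rewrite -[RHS](card_ord n) -sum1_card.
by apply: eq_bigr => i _; rewrite xE eqxx.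
Qed.

Definition twos_then_majority : op n := fun x =>
  if 0 < count_of x d2 then d2
  else if count_of x d1 < count_of x d0 then d0 else d1.

Lemma twos_then_majority_eq2 x : (val (twos_then_majority x) == 2) = (0 < count_of x d2).
Proof. by rewrite /twos_then_majority; case: ifP => //; case: ifP. Qed.

Lemma twos_then_majority_symmetric : symmetric_op twos_then_majority.
Proof. by move=> s x; rewrite /twos_then_majority !count_of_perm. Qed.

Hypothesis odd_n : odd n.

Lemma twos_then_majority_swap01 x :
  twos_then_majority [ffun i => swap01 (x i)] = swap01 (twos_then_majority x).
Proof.
have countE c : count_of [ffun i => swap01 (x i)] c = count_of x (swap01 c).
  by rewrite -[c in LHS](tpermK d0 d1) count_of_perm_map.
rewrite /twos_then_majority !countE /swap01 !permE /=.
case: ifP => // /negbT; rewrite -eqn0Ngt => /eqP no2.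
have := count_of_partition x; rewrite no2 addn0.
case: ltngtP => // c0E nE.
by move: odd_n; rewrite -nE c0E addnn odd_double.
Qed.

Lemma twos_then_majority_idempotent x c :
  (forall i, x i = c) -> twos_then_majority x = c.
Proof.
move=> xE; have count_x b : count_of x b = (c == b) * n.
  case: (eqVneq c b) => [<- | neq_cb]; first by rewrite count_of_const ?mul1n.
  by rewrite /count_of big1 // => i _; rewrite xE (negbTE neq_cb).
have n_gt0 := odd_gt0 odd_n.
rewrite /twos_then_majority !count_x.
case: c {xE count_x} => [[|[|[|?]]] ?] //=; rewrite ?mul0n ?mul1n ?n_gt0.
all: exact: val_inj.
Qed.

Lemma Pol_M1_twos_then_majority : Pol_M1 twos_then_majority.
Proof.
have const_f k : preserves1 (is_const k) twos_then_majority.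
  exact: idempotent_preserves_const (odd_gt0 odd_n) twos_then_majority_idempotent.
split=> //.
- exact/(preserves2_graphE _ psi2E)/twos_then_majority_swap01.
- move=> x y xy_mu2; rewrite /mu2 !twos_then_majority_eq2.
  by rewrite (@count_of_eq x y d2 d2) // => i; exact: eqP (xy_mu2 i).
Qed.

End TwosThenMajority.

Lemma Sigma2_Pol_M1 : Sigma2 Pol_M1.
Proof.
exists (@twos_then_majority 5); split.
- exact: Pol_M1_twos_then_majority.
- exact: twos_then_majority_symmetric.
- move=> a b c; rewrite /twos_then_majority /count_of !big_ord_recr !big_ord0 !ffunE /=.
  by case: a => [[|[|[|?]]] ?]; case: b => [[|[|[|?]]] ?]; case: c => [[|[|[|?]]] ?].
Qed.

Theorem lemma6p8 : ~ Sigma2 Pol_M0 /\ Sigma2 Pol_M1.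
Proof. exact: (conj not_Sigma2_Pol_M0 Sigma2_Pol_M1). Qed.
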